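(* Consider the second-order Kuramoto model with bonding force $$\dot\theta_i=\omega_i,\qquad \dot\omega_i=\frac{1}{N}\sum_{j=1}^N\big[\kappa_0\cos(\theta_j-\theta_i)+\kappa_1\big](\omega_j-\omega_i)+\frac{\kappa_2}{N}\sum_{j=1}^N\big[|\theta_j-\theta_i|-\theta^\infty_{ij}\big]\operatorname{sgn}(\theta_j-\theta_i),\quad i\in[N].$$ Suppose $(\Theta^0,W^0)\in\mathcal{S}$, $\mathcal{E}(0)<\frac{\kappa_2(\min_{i\ne j}\theta^\infty_{ij})^2}{2N}$, $\kappa_0\cos\mathcal{U}+\kappa_1>0$, $\kappa_2>0$, and let $\{(\theta_i,\omega_i)\}$ be a global smooth solution. Then: (i) $\lim_{t\to\infty}\max_{i,j}|\dot\theta_j(t)-\dot\theta_i(t)|=0$; (ii) if $\sum_{i=1}^N\omega_i^0=0$, then $\lim_{t\to\infty}\max_{1\le i\le N}|\omega_i(t)|=0$.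
   Context: $N\ge2$, $\kappa_0,\kappa_1\ge0$; $[\theta^\infty_{ij}]$ real symmetric with zero diagonal; $\operatorname{sgn}$ the sign function; $\omega_i^0=\omega_i(0)$. $\mathcal{E}:=\frac12\sum_i|\omega_i|^2+\frac{\kappa_2}{4N}\sum_{i,j}(|\theta_j-\theta_i|-\theta^\infty_{ij})^2$; $\mathcal{U}:=\max_{i\ne j}\theta^\infty_{ij}+\sqrt{2N\mathcal{E}(0)/\kappa_2}$; $\mathcal{S}:=\{(\Theta,W)\in\mathbb{R}^{2N}:|\theta_i-\theta_j|<\mathcal{U}<\pi\ \forall i,j\}$. *)

From HB Require Import structures.
From mathcomp Require Import all_boot all_order all_algebra.
From mathcomp Require Import all_classical all_reals all_analysis.
Set Implicit Arguments. Unset Strict Implicit. Unset Printing Implicit Defensive.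
Import Order.TTheory GRing.Theory Num.Theory.
Import numFieldNormedType.Exports.
Local Open Scope ring_scope.

Section Kuramoto.
Variables (R : realType) (N : nat).

Definition maxall (A : 'I_N -> 'I_N -> R) : R :=
  \big[Num.max/0]_(i < N) \big[Num.max/0]_(j < N) A i j.
Definition minall (A : 'I_N -> 'I_N -> R) : R :=
  \big[Num.min/0]_(i < N) \big[Num.min/0]_(j < N) A i j.

(* max_{i <> j} A i j and min_{i <> j} A i j (well defined for N >= 2:
   the default value is dominated / dominating) *)
Definition max_offdiag (A : 'I_N -> 'I_N -> R) : R :=
  \big[Num.max/minall A]_(i < N) \big[Num.max/minall A]_(j < N | i != j) A i j.
Definition min_offdiag (A : 'I_N -> 'I_N -> R) : R :=
  \big[Num.min/maxall A]_(i < N) \big[Num.min/maxall A]_(j < N | i != j) A i j.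

Definition energy (k2 : R) (thinf : 'I_N -> 'I_N -> R)
  (theta omega : 'I_N -> R -> R) (t : R) : R :=
  2^-1 * (\sum_(i < N) (omega i t) ^+ 2)
  + k2 / (4 * N%:R) *
    (\sum_(i < N) \sum_(j < N)
        (`|theta j t - theta i t| - thinf i j) ^+ 2).

Definition Ubound (k2 : R) (thinf : 'I_N -> 'I_N -> R)
  (theta omega : 'I_N -> R -> R) : R :=
  max_offdiag thinf
  + Num.sqrt (2 * N%:R * energy k2 thinf theta omega 0 / k2).

Definition kuramoto_rhs (k0 k1 k2 : R) (thinf : 'I_N -> 'I_N -> R)
  (theta omega : 'I_N -> R -> R) (i : 'I_N) (t : R) : R :=
  N%:R^-1 * (\sum_(j < N) (k0 * cos (theta j t - theta i t) + k1)
                           * (omega j t - omega i t))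
  + k2 / N%:R * (\sum_(j < N) (`|theta j t - theta i t| - thinf i j)
                              * Num.sg (theta j t - theta i t)).

Definition max_diff (x : 'I_N -> R) : R :=
  \big[Num.max/0]_(i < N) \big[Num.max/0]_(j < N) `|x j - x i|.
Definition max_abs (x : 'I_N -> R) : R :=
  \big[Num.max/0]_(i < N) `|x i|.

End Kuramoto.

(* Along the flow the energy E decreases at the rate
   (1/2N) sum_ij (k0 cos(theta_j - theta_i) + k1) (omega_j - omega_i)^2,
   as long as no two phases meet (so that |theta_j - theta_i| is
   differentiable) and all couplings are positive.  While E(t) <= E(0), every
   pair satisfies | |theta_j - theta_i| - thinf_ij | <= r = sqrt(2N E(0)/k2),
   and the smallness of E(0) means r < min thinf; so every gap stays in
   [min thinf - r, U], inside (0, pi), and every coupling stays above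
   k0 cos U + k1 > 0.  A continuity argument then gives E(t) <= E(0) for
   all t.  Since the right-hand side is bounded, the velocity differences are
   Lipschitz, and a Barbalat-type argument turns the finite total dissipation
   into omega_j - omega_i -> 0.  The total momentum is conserved, which
   gives (ii). *)

From HB Require Import structures.
From mathcomp Require Import all_boot all_order all_algebra.
From mathcomp Require Import all_classical all_reals all_analysis.
From mathcomp Require Import ring lra.
Set Implicit Arguments.
Unset Strict Implicit.
Unset Printing Implicit Defensive.
Import Order.TTheory GRing.Theory Num.Theory.
Import numFieldNormedType.Exports.
Local Open Scope ring_scope.
Local Open Scope classical_set_scope.

Section RealFacts.
Context {R : realType}.
Implicit Types (f : R -> R) (a b c t : R).

Lemma ler_sum_term (I : finType) (F : I -> R) i :
  (forall k, 0 <= F k) -> F i <= \sum_k F k.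
Proof. by move=> F_ge0; rewrite (bigD1 i) //= lerDl sumr_ge0. Qed.

Lemma ler_sum_two (I : finType) (F : I -> R) i j : i != j ->
  (forall k, 0 <= F k) -> F i + F j <= \sum_k F k.
Proof.
move=> ij F_ge0; rewrite (bigD1 i) //= (bigD1 j) 1?eq_sym //=.
by rewrite addrA lerDl sumr_ge0.
Qed.

Lemma sumr_skew0 n (F : 'I_n -> 'I_n -> R) :
  (forall i j, F j i = - F i j) -> \sum_i \sum_j F i j = 0.
Proof.
move=> Fskew; have : \sum_i \sum_j F i j = - \sum_i \sum_j F i j.
  rewrite {1}exchange_big /= -sumrN; apply: eq_bigr => j _.
  by rewrite -sumrN; apply: eq_bigr => i _.
lra.
Qed.

Lemma norm_mean_le n (F : 'I_n -> R) b : (0 < n)%N ->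
  (forall j, `|F j| <= b) -> `|n%:R^-1 * \sum_j F j| <= b.
Proof.
move=> n_gt0 Fb; rewrite normrM ger0_norm ?invr_ge0 ?ler0n // ler_pdivrMl ?ltr0n //.
apply: le_trans (ler_norm_sum _ _ _) _.
apply: le_trans (ler_sum _ (fun j _ => Fb j)) _.
by rewrite sumr_const card_ord mulr_natl.
Qed.

Lemma cos_le_cos_norm (x u : R) : u <= pi -> `|x| <= u -> cos u <= cos x.
Proof.
move=> u_le_pi xu; rewrite -(cos_norm x).
have u_ge0 : 0 <= u := le_trans (normr_ge0 x) xu.
by rewrite leNgt ltr_cos ?in_itv /= ?u_ge0 ?normr_ge0 ?(le_trans xu) // -leNgt.
Qed.

Lemma cvg_sumr {T} (F : set_system T) {FF : Filter F} (I : Type) (r : seq I)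
  (g : I -> T -> R) (l : I -> R) :
  (forall i, g i x @[x --> F] --> l i) ->
  \sum_(i <- r) g i x @[x --> F] --> \sum_(i <- r) l i.
Proof. by move=> gl; apply: cvg_big => //; exact: add_continuous. Qed.

Lemma is_derive_cvg f t (df : R) : is_derive t 1 f df -> f s @[s --> t] --> f t.
Proof.
by move=> fdf; apply: differentiable_continuous; apply/derivable1_diffP; exact: ex_derive.
Qed.

Lemma is_derive_normr f t (df : R) : is_derive t 1 f df -> f t != 0 ->
  is_derive t 1 (fun s => `|f s|) (Num.sg (f t) * df).
Proof.
move=> fdf ft_neq0; have fC := is_derive_cvg fdf.
apply: (@near_eq_is_derive _ _ _ (fun s => Num.sg (f t) * f s)).
case: (ltgtP (f t) 0) ft_neq0 => [ft_lt0|ft_gt0|->]; rewrite ?eqxx // => _.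
- apply: filterS (cvgr_lt (f t) fC 0 ft_lt0) => s fs_lt0.
  by rewrite ltr0_sg // ltr0_norm // mulN1r.
- apply: filterS (cvgr_gt (f t) fC 0 ft_gt0) => s fs_gt0.
  by rewrite gtr0_sg // gtr0_norm // mul1r.
Qed.

Lemma is_derive_sqr f t (df : R) : is_derive t 1 f df ->
  is_derive t 1 (fun s => f s ^+ 2) (2 * f t * df).
Proof.
by move=> fdf; apply: is_derive_eq (is_deriveM fdf fdf) _; rewrite /GRing.scale /=; ring.
Qed.

Lemma is_derive_slope_le f (df : R -> R) a b c : a < b ->
  (forall x, x \in `]a, b[%R -> is_derive x 1 f (df x)) ->
  (forall x, x \in `]a, b[%R -> df x <= c) ->
  {within `[a, b], continuous f} -> f b - f a <= c * (b - a).
Proof.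
move=> ab fdf df_le fC.
have [x xab ->] := MVT ab fdf fC.
by rewrite ler_pM2r ?subr_gt0 // df_le.
Qed.

Lemma is_derive_lipschitz f (df : R -> R) a b (L : R) : a < b ->
  (forall x, x \in `]a, b[%R -> is_derive x 1 f (df x)) ->
  (forall x, x \in `]a, b[%R -> `|df x| <= L) ->
  {within `[a, b], continuous f} -> `|f b - f a| <= L * (b - a).
Proof.
move=> ab fdf dfL fC.
have [x xab ->] := MVT ab fdf fC.
rewrite normrM [`|b - a|]ger0_norm; last by rewrite subr_ge0 ltW.
by rewrite ler_pM2r ?subr_gt0 // dfL.
Qed.

Lemma right_continuation (V : R -> R) (P : R -> Prop) :
  (forall y : R, 0 <= y -> (forall s, 0 < s < y -> P s) -> V y <= V 0) ->
  (forall s : R, 0 <= s -> V s <= V 0 -> P s) ->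
  (forall T : R, 0 <= T -> P T -> \forall s \near T^'+, P s) ->
  forall t : R, 0 <= t -> V t <= V 0.
Proof.
(* Look at the first time T where V exceeds V 0: P holds up to T and, being
   open to the right, a little beyond, which keeps V below V 0 there too. *)
move=> V_le P_of_V P_right t t_ge0; rewrite leNgt; apply/negP => Vt.
pose A := [set s | 0 <= s /\ V 0 < V s].
have A_lb : lbound A 0 by move=> s [].
have A_inf : has_inf A by split; [exists t | exists 0].
pose T := inf A.
have T_ge0 : 0 <= T := lb_le_inf A_inf.1 A_lb.
have P_lt_T s : 0 <= s -> s < T -> P s.
  move=> s_ge0 sT; apply: P_of_V => //; rewrite leNgt; apply/negP => Vs.
  by move: sT; rewrite ltNge (ge_inf A_inf.2 (conj s_ge0 Vs)).
have PT : P T.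
  apply: P_of_V => //; apply: V_le => // s /andP[s_gt0 sT].
  by apply: P_lt_T => //; exact: ltW.
have [e e_gt0 P_gt_T] : exists2 e, 0 < e & forall s, T < s < T + e -> P s.
  move: (P_right T T_ge0 PT); rewrite /at_right near_withinE.
  move=> /nbhs_ballP[e /= e_gt0 Pe]; exists e => // s /andP[Ts sTe].
  by apply: Pe => //; rewrite /ball /= ltr0_norm ?subr_lt0 // opprB ltrBlDl.
have [s [s_ge0 Vs] sTe] := inf_adherent e_gt0 A_inf.
move: Vs; apply/negP; rewrite -leNgt; apply: V_le => // u /andP[u_gt0 us].
case: (ltgtP u T) => [uT|Tu|->] //; first exact: P_lt_T (ltW u_gt0) uT.
by apply: P_gt_T; rewrite Tu (lt_trans us).
Qed.

Lemma dissipation_cvg0 (V g : R -> R) (L c : R) : 0 < c ->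
  (forall t : R, 0 <= t -> 0 <= V t) ->
  (forall x y : R, 0 <= x -> x <= y -> `|g y - g x| <= L * (y - x)) ->
  (forall x y e : R, 0 <= x -> x <= y -> 0 <= e ->
     (forall s, x < s < y -> e <= `|g s|) -> V y + c * e ^+ 2 * (y - x) <= V x) ->
  g t @[t --> +oo] --> 0.
Proof.
(* Once V x0 is within k of inf V, |g x| >= eps at some x > x0 would keep
   |g| >= eps/2 on [x, x + d] by the Lipschitz bound, and V would lose more
   than k there. *)
move=> c_gt0 V_ge0 g_lip V_decay; apply/cvgr0Pnorm_lt => eps eps_gt0.
have L_ge0 : 0 <= L.
  have := g_lip 0 1 (lexx 0) ler01; rewrite subr0 mulr1.
  exact: le_trans (normr_ge0 _).
pose d := eps / (2 * (L + 1)).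
have d_gt0 : 0 < d by apply: divr_gt0 => //; lra.
have Ld : L * d <= eps / 2.
  rewrite /d mulrA ler_pdivrMr; last lra.
  by rewrite mulrC -mulrA ler_pM2l //; nra.
pose A := V @` [set s | 0 <= s].
have A_inf : has_inf A.
  split; first by exists (V 0); apply: imageP => /=.
  by exists 0 => _ [s s_ge0 <-]; exact: V_ge0.
pose k := c * (eps / 2) ^+ 2 * d.
have k_gt0 : 0 < k.
  by rewrite /k; apply: mulr_gt0 => //; apply: mulr_gt0 => //; exact/exprn_gt0/divr_gt0.
have [_ [x0 x0_ge0 <-] Vx0] := inf_adherent k_gt0 A_inf.
exists x0; split; first exact: num_real.
move=> x x0x; rewrite ltNge; apply/negP => eps_le_gx.
have x_ge0 : 0 <= x by apply: le_trans (ltW x0x).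
have g_far : forall s, x < s < x + d -> eps / 2 <= `|g s|.
  move=> s /andP[xs sxd]; have := g_lip x s x_ge0 (ltW xs).
  have : L * (s - x) <= L * d by apply: ler_wpM2l => //; lra.
  have := lerB_dist (g x) (g s); rewrite (distrC (g x)) => ? ? ?; lra.
have decay : V (x + d) + k <= V x.
  have xd : x <= x + d by lra.
  have e_ge0 : 0 <= eps / 2 by lra.
  by have := V_decay x (x + d) (eps / 2) x_ge0 xd e_ge0 g_far; rewrite addrAC subrr add0r.
have := V_decay x0 x 0 x0_ge0 (ltW x0x) (lexx 0) (fun _ _ => normr_ge0 _).
have : inf A <= V (x + d).
  by apply: (ge_inf A_inf.2); apply: imageP => /=; lra.
rewrite expr0n /= mulr0 mul0r addr0; lra.
Qed.

End RealFacts.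

Section FiniteExtrema.
Variables (R : realType) (N : nat).
Implicit Types (A : 'I_N -> 'I_N -> R) (i j : 'I_N).

Lemma min_offdiag_le A i j : i != j -> min_offdiag A <= A i j.
Proof.
move=> ij; apply: (@bigmin_inf _ _ _ _ i) => //.
exact: (@bigmin_le_cond _ _ _ _ j).
Qed.

Lemma max_offdiag_ge A i j : i != j -> A i j <= max_offdiag A.
Proof.
move=> ij; apply: (@bigmax_sup _ _ _ _ i) => //.
exact: (@le_bigmax_cond _ _ _ _ j).
Qed.

Lemma min_offdiag_ge A (b : R) : (1 < N)%N ->
  (forall i j, i != j -> b <= A i j) -> b <= min_offdiag A.
Proof.
move=> N_gt1 Ab.
have b_le_max : b <= maxall A.
  pose i0 := Ordinal (ltnW N_gt1); pose j0 := Ordinal N_gt1.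
  apply: le_trans (Ab i0 j0 _) _; first by apply/eqP => /(congr1 val).
  apply: (@bigmax_sup _ _ _ _ i0) => //; exact: (@le_bigmax_cond _ _ _ _ j0).
by apply: le_bigmin => // i _; apply: le_bigmin => // j; apply: Ab.
Qed.

Lemma max_diff_cvg0 {T} (F : set_system T) {FF : Filter F} (x : 'I_N -> T -> R) :
  (forall i j, x j t - x i t @[t --> F] --> 0) ->
  max_diff (fun i => x i t) @[t --> F] --> 0.
Proof.
move=> x_cvg; apply/cvgr0Pnorm_lt => eps eps_gt0.
have : \forall t \near F, forall i j, `|x j t - x i t| < eps.
  apply: filter_forall => i; apply: filter_forall => j.
  by move/cvgr0Pnorm_lt: (x_cvg i j); apply.
apply: filterS => t x_near; rewrite ger0_norm ?bigmax_ge_id //.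
by apply: bigmax_lt => // i _; apply: bigmax_lt.
Qed.

Lemma max_abs_cvg0 {T} (F : set_system T) {FF : Filter F} (x : 'I_N -> T -> R) :
  (forall i, x i t @[t --> F] --> 0) ->
  max_abs (fun i => x i t) @[t --> F] --> 0.
Proof.
move=> x_cvg; apply/cvgr0Pnorm_lt => eps eps_gt0.
have : \forall t \near F, forall i, `|x i t| < eps.
  by apply: filter_forall => i; move/cvgr0Pnorm_lt: (x_cvg i); apply.
by apply: filterS => t x_near; rewrite ger0_norm ?bigmax_ge_id // bigmax_lt.
Qed.

End FiniteExtrema.

Section SecondOrderKuramoto.
Variables (R : realType) (N : nat) (k0 k1 k2 : R)
  (thinf : 'I_N -> 'I_N -> R) (theta omega : 'I_N -> R -> R).

Local Notation E := (energy k2 thinf theta omega).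
Local Notation U := (Ubound k2 thinf theta omega).
Local Notation m := (min_offdiag thinf).
Local Notation r := (Num.sqrt (2 * N%:R * E 0 / k2)).
Local Notation rhs := (kuramoto_rhs k0 k1 k2 thinf theta omega).
Local Notation gap i j t := (theta j t - theta i t).
Local Notation strain i j t := ((`|gap i j t| - thinf i j) ^+ 2).
Local Notation spring i j t := ((`|gap i j t| - thinf i j) * Num.sg (gap i j t)).
Local Notation coupling i j t := (k0 * cos (gap i j t) + k1).

Hypotheses (N_ge2 : (2 <= N)%N) (k0_ge0 : 0 <= k0) (k1_ge0 : 0 <= k1) (k2_gt0 : 0 < k2).
Hypothesis thinf_sym : forall i j, thinf i j = thinf j i.
Hypotheses (U_lt_pi : U < pi) (coupling_U_gt0 : 0 < k0 * cos U + k1).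
Hypothesis E0_lt : E 0 < k2 * m ^+ 2 / (2 * N%:R).
Hypothesis theta0 : forall i, theta i x @[x --> 0^'+] --> theta i 0.
Hypothesis omega0 : forall i, omega i x @[x --> 0^'+] --> omega i 0.
Hypothesis theta_deriv :
  forall (i : 'I_N) (t : R), 0 < t -> is_derive t 1 (theta i) (omega i t).
Hypothesis omega_deriv :
  forall (i : 'I_N) (t : R), 0 < t -> is_derive t 1 (omega i) (rhs i t).

Let N_gt0 : (0 < N)%N. Proof. exact: leq_trans N_ge2. Qed.
Let Nr_gt0 : 0 < N%:R :> R. Proof. by rewrite ltr0n N_gt0. Qed.

Lemma strain_sym t i j : strain i j t = strain j i t.
Proof. by rewrite distrC thinf_sym. Qed.

Lemma kinetic_ge0 t : 0 <= \sum_i omega i t ^+ 2.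
Proof. by apply: sumr_ge0 => i _; exact: sqr_ge0. Qed.

Lemma potential_ge0 t : 0 <= k2 / (4 * N%:R) * \sum_a \sum_b strain a b t.
Proof.
apply: mulr_ge0; first by apply: divr_ge0; [exact: ltW | apply: mulr_ge0].
by apply: sumr_ge0 => a _; apply: sumr_ge0 => b _; exact: sqr_ge0.
Qed.

Lemma energy_ge0 t : 0 <= E t.
Proof.
by apply: addr_ge0; [apply: mulr_ge0; rewrite ?kinetic_ge0 | exact: potential_ge0].
Qed.

Lemma energy_ge_omega t i : omega i t ^+ 2 / 2 <= E t.
Proof.
apply: le_trans (_ : 2^-1 * \sum_k omega k t ^+ 2 <= E t).
  rewrite mulrC ler_pM2l ?invr_gt0 //.
  by apply: (ler_sum_term (F := fun k => omega k t ^+ 2)) => k; exact: sqr_ge0.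
by rewrite /energy lerDl potential_ge0.
Qed.

Lemma energy_ge_strain t i j : i != j -> k2 / (2 * N%:R) * strain i j t <= E t.
Proof.
move=> ij; apply: le_trans (_ : k2 / (4 * N%:R) * \sum_a \sum_b strain a b t <= E t).
  have -> : k2 / (2 * N%:R) * strain i j t =
            k2 / (4 * N%:R) * (strain i j t + strain j i t).
    by rewrite -strain_sym; field; rewrite pnatr_eq0 -lt0n N_gt0.
  rewrite ler_pM2l ?divr_gt0 ?mulr_gt0 ?Nr_gt0 //.
  have row_ge0 a : 0 <= \sum_b strain a b t by apply: sumr_ge0 => b _; exact: sqr_ge0.
  apply: le_trans (ler_sum_two (F := fun a => \sum_b strain a b t) ij row_ge0).
  by apply: lerD; apply: (ler_sum_term (F := fun b => strain _ b t)) => b; exact: sqr_ge0.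
by rewrite /energy lerDr mulr_ge0 ?kinetic_ge0.
Qed.

Lemma deviation_le t i j : i != j -> E t <= E 0 -> `| `|gap i j t| - thinf i j | <= r.
Proof.
move=> ij Et_le; have := le_trans (energy_ge_strain t ij) Et_le.
rewrite mulrAC ler_pdivrMr ?mulr_gt0 ?Nr_gt0 // => strain_le.
have : strain i j t <= r ^+ 2.
  rewrite sqr_sqrtr ?divr_ge0 ?mulr_ge0 ?energy_ge0 ?(ltW k2_gt0) //.
  by rewrite ler_pdivlMr //; nra.
by move/ler_wsqrtr; rewrite !sqrtr_sqr (ger0_norm (sqrtr_ge0 _)).
Qed.

Lemma sqrt_energy_lt_min_offdiag : r < m.
Proof.
have r_ge0 : 0 <= r := sqrtr_ge0 _.
have mr : - r <= m.
  apply: (min_offdiag_ge N_ge2) => i j ij.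
  have := deviation_le ij (lexx (E 0)); rewrite ler_norml => /andP[_].
  by have := normr_ge0 (gap i j 0); lra.
have : r ^+ 2 < m ^+ 2.
  rewrite sqr_sqrtr ?divr_ge0 ?mulr_ge0 ?energy_ge0 ?(ltW k2_gt0) // ltr_pdivrMr //.
  by move: E0_lt; rewrite ltr_pdivlMr ?mulr_gt0 ?Nr_gt0 //; nra.
by nra.
Qed.

Lemma gap_bounds t i j : i != j -> E t <= E 0 -> m - r <= `|gap i j t| <= U.
Proof.
move=> ij Et_le; have := deviation_le ij Et_le; rewrite ler_norml => /andP[lo hi].
have := min_offdiag_le thinf ij; have := max_offdiag_ge thinf ij.
by rewrite /Ubound => ? ?; apply/andP; split; lra.
Qed.

Lemma coupling_ge t i j : `|gap i j t| <= U -> k0 * cos U + k1 <= coupling i j t.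
Proof. by move=> gapU; rewrite lerD2r ler_wpM2l // cos_le_cos_norm // ltW. Qed.

Definition admissible t := forall i j, i != j -> gap i j t != 0 /\ 0 < coupling i j t.

Lemma admissible_of_energy t : E t <= E 0 -> admissible t.
Proof.
move=> Et_le i j ij; have /andP[lo hi] := gap_bounds ij Et_le.
split; last exact: lt_le_trans coupling_U_gt0 (coupling_ge hi).
by rewrite -normr_gt0; have := sqrt_energy_lt_min_offdiag; lra.
Qed.

Lemma coupling_sym t i j : coupling j i t = coupling i j t.
Proof. by rewrite -(opprB (theta j t)) cosN. Qed.

Lemma spring_skew t i j : spring j i t = - spring i j t.
Proof. by rewrite distrC thinf_sym -(opprB (theta j t)) sgrN mulrN. Qed.

Lemma rhs_expand i t : rhs i t =
  \sum_j (N%:R^-1 * (coupling i j t * (omega j t - omega i t))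
          + k2 / N%:R * spring i j t).
Proof. by rewrite /kuramoto_rhs big_split /= -!mulr_sumr. Qed.

Definition dissipation t :=
  (2 * N%:R)^-1 * \sum_i \sum_j coupling i j t * (omega j t - omega i t) ^+ 2.

Lemma energy_balance t :
  2^-1 * (\sum_i 2 * omega i t * rhs i t)
  + k2 / (4 * N%:R) * (\sum_i \sum_j 2 * spring i j t * (omega j t - omega i t))
  = - dissipation t.
Proof.
(* After symmetrisation in (i, j), all terms except the dissipation are
   skew-symmetric and cancel. *)
have N_neq0 : N%:R != 0 :> R by rewrite pnatr_eq0 -lt0n N_gt0.
apply/eqP; rewrite -subr_eq0 opprK /dissipation !mulr_sumr -!big_split /=.
rewrite (eq_bigr (fun i => \sum_j ((2 * N%:R)^-1 *
    (coupling i j t * (omega j t - omega i t) * (omega i t + omega j t))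
    + k2 / (2 * N%:R) * (spring i j t * (omega i t + omega j t))))); last first.
  move=> i _; rewrite rhs_expand !mulr_sumr -!big_split /=; apply: eq_bigr => j _.
  by field.
apply/eqP/sumr_skew0 => i j; rewrite coupling_sym spring_skew; ring.
Qed.

Lemma is_derive_strain t i j : 0 < t -> i = j \/ gap i j t != 0 ->
  is_derive t 1 (fun s => strain i j s) (2 * spring i j t * (omega j t - omega i t)).
Proof.
move=> t_gt0 [<-|gap_neq0].
  rewrite !subrr sgr0 !(mulr0, mul0r); under eq_fun do rewrite subrr.
  exact: is_derive_cst.
have dgap : is_derive t 1 (fun s => gap i j s) (omega j t - omega i t).
  by apply: is_deriveB; exact: theta_deriv.
have dnorm := is_derive_normr dgap gap_neq0.
have := is_derive_sqr (is_deriveB dnorm (is_derive_cst (thinf i j) t 1)).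
by move/is_derive_eq; apply; rewrite /= subr0 !mulrA.
Qed.

Lemma is_derive_energy t : 0 < t -> admissible t -> is_derive t 1 E (- dissipation t).
Proof.
move=> t_gt0 adm; rewrite -energy_balance.
have dkin : is_derive t 1 (fun s => \sum_i omega i s ^+ 2)
    (\sum_i 2 * omega i t * rhs i t).
  have dsq i := is_derive_sqr (omega_deriv i t_gt0).
  by have := is_derive_sum dsq; rewrite fct_sumE.
have dpot : is_derive t 1 (fun s => \sum_i \sum_j strain i j s)
    (\sum_i \sum_j 2 * spring i j t * (omega j t - omega i t)).
  have gap_neq0 i j : i = j \/ gap i j t != 0.
    by case: (eqVneq i j) => [|/adm[]]; [left | right].
  have drow i : is_derive t 1 (fun s => \sum_j strain i j s)
      (\sum_j 2 * spring i j t * (omega j t - omega i t)).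
    have dstrain j := is_derive_strain t_gt0 (gap_neq0 i j).
    by have := is_derive_sum dstrain; rewrite fct_sumE.
  by have := is_derive_sum drow; rewrite fct_sumE.
exact: is_deriveD (is_deriveZ _ dkin) (is_deriveZ _ dpot).
Qed.

Lemma dissipation_term_ge0 t i j : admissible t ->
  0 <= coupling i j t * (omega j t - omega i t) ^+ 2.
Proof.
move=> adm; case: (eqVneq i j) => [->|ij]; first by rewrite !subrr expr0n mulr0.
by rewrite mulr_ge0 ?sqr_ge0 //; case: (adm i j ij) => _ /ltW.
Qed.

Lemma dissipation_ge_pair t i j : admissible t ->
  (2 * N%:R)^-1 * (coupling i j t * (omega j t - omega i t) ^+ 2) <= dissipation t.
Proof.
move=> adm; rewrite ler_pM2l ?invr_gt0 ?mulr_gt0 ?Nr_gt0 //.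
apply: le_trans (ler_sum_term (F := fun a => \sum_b _) i _).
  by apply: ler_sum_term => b; exact: dissipation_term_ge0.
by move=> a; apply: sumr_ge0 => b _; exact: dissipation_term_ge0.
Qed.

Lemma dissipation_ge0 t : admissible t -> 0 <= dissipation t.
Proof.
move=> adm; rewrite mulr_ge0 ?invr_ge0 ?mulr_ge0 //.
by apply: sumr_ge0 => a _; apply: sumr_ge0 => b _; exact: dissipation_term_ge0.
Qed.

(* [f] is a continuous function of the state (theta(t), omega(t)): it
   converges along any filter along which the state converges. *)
Definition observable (f : R -> R) := forall (F : set_system R) (a : R), Filter F ->
  (forall i, theta i x @[x --> F] --> theta i a) ->
  (forall i, omega i x @[x --> F] --> omega i a) -> f x @[x --> F] --> f a.

Lemma observable_cvg f (t : R) : observable f -> 0 < t -> f x @[x --> t] --> f t.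
Proof.
move=> fO t_gt0; apply: fO => i.
- exact: is_derive_cvg (theta_deriv i t_gt0).
- exact: is_derive_cvg (omega_deriv i t_gt0).
Qed.

Lemma observable_at_right f (t : R) : observable f -> 0 <= t -> f x @[x --> t^'+] --> f t.
Proof.
move=> fO; rewrite le_eqVlt => /predU1P[<-|t_gt0]; first exact: fO.
by apply: cvg_at_right_filter; exact: observable_cvg.
Qed.

Lemma observable_within f (x y : R) : observable f -> 0 <= x -> x < y ->
  {within `[x, y], continuous f}.
Proof.
move=> fO x_ge0 xy; apply/continuous_within_itvP => //; split.
- move=> s; rewrite in_itv /= => /andP[xs _].
  by apply: observable_cvg => //; exact: le_lt_trans xs.
- exact: observable_at_right.
- by apply: cvg_at_left_filter; apply: observable_cvg => //; exact: le_lt_trans xy.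
Qed.

Lemma observable_energy : observable E.
Proof.
move=> F a FF th om; apply: cvgD; apply: cvgM; try exact: cvg_cst.
  by apply: cvg_sumr => i; exact: cvgM.
apply: cvg_sumr => i; apply: cvg_sumr => j; apply: cvgM;
  by apply: cvgB; [apply: cvg_norm; apply: cvgB | exact: cvg_cst].
Qed.

Lemma observable_gap i j : observable (fun t => gap i j t).
Proof. by move=> F a FF th om; apply: cvgB. Qed.

Lemma observable_coupling i j : observable (fun t => coupling i j t).
Proof.
move=> F a FF th om; apply: cvgD; last exact: cvg_cst.
apply: cvgM; first exact: cvg_cst.
by apply: continuous_cvg; [exact: continuous_cos | exact: observable_gap].
Qed.

Lemma observable_omega_diff i j : observable (fun t => omega j t - omega i t).
Proof. by move=> F a FF th om; apply: cvgB. Qed.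

Lemma observable_omega_sum : observable (fun t => \sum_i omega i t).
Proof. by move=> F a FF th om; apply: cvg_sumr. Qed.

Lemma admissible_right T : 0 <= T -> admissible T -> \forall s \near T^'+, admissible s.
Proof.
move=> T_ge0 adm; apply: filter_forall => i; apply: filter_forall => j.
case: (eqVneq i j) => [->|ij]; first exact: nearW.
have [gap_neq0 c_gt0] := adm i j ij.
have gap_near : \forall s \near T^'+, 0 < `|gap i j s|.
  apply: (cvgr_gt _ (cvg_norm (observable_at_right (@observable_gap i j) T_ge0)) 0).
  by rewrite normr_gt0.
have c_near : \forall s \near T^'+, 0 < coupling i j s.
  exact: (cvgr_gt _ (observable_at_right (@observable_coupling i j) T_ge0) 0 c_gt0).
by apply: filterS2 gap_near c_near => s; rewrite normr_gt0 => ? ? _.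
Qed.

Lemma energy_decay x y d : 0 <= x -> x <= y ->
  (forall s, x < s < y -> admissible s /\ d <= dissipation s) -> E y + d * (y - x) <= E x.
Proof.
move=> x_ge0; rewrite le_eqVlt => /predU1P[<-|xy] H; first by rewrite subrr mulr0 addr0.
have H' s : s \in `]x, y[%R -> admissible s /\ d <= dissipation s.
  by rewrite in_itv /= => /H.
have s_gt0 s : s \in `]x, y[%R -> 0 < s.
  by rewrite in_itv /= => /andP[xs _]; exact: le_lt_trans xs.
suff : E y - E x <= - d * (y - x) by lra.
apply: (is_derive_slope_le (df := fun s => - dissipation s)) xy _ _
  (observable_within observable_energy x_ge0 xy).
- by move=> s sxy; apply: is_derive_energy; [exact: s_gt0 | case: (H' s sxy)].
- by move=> s sxy; rewrite lerN2; case: (H' s sxy).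
Qed.

Lemma energy_le_initial t : 0 <= t -> E t <= E 0.
Proof.
apply: (right_continuation (P := admissible)).
- move=> y y_ge0 adm; have := energy_decay (d := 0) (lexx 0) y_ge0.
  rewrite mul0r addr0; apply=> s s0y; have s_adm := adm s s0y.
  by split; last exact: dissipation_ge0.
- by move=> s _; exact: admissible_of_energy.
- exact: admissible_right.
Qed.

Lemma admissible_all t : 0 <= t -> admissible t.
Proof. by move=> t_ge0; apply/admissible_of_energy/energy_le_initial. Qed.

Lemma omega_bound i t : 0 <= t -> `|omega i t| <= Num.sqrt (2 * E 0).
Proof.
move=> t_ge0; rewrite -sqrtr_sqr; apply: ler_wsqrtr.
have := le_trans (energy_ge_omega t i) (energy_le_initial t_ge0); lra.
Qed.

Local Notation B := ((k0 + k1) * (2 * Num.sqrt (2 * E 0)) + k2 * r).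

Lemma rhs_bound i t : 0 <= t -> `|rhs i t| <= B.
Proof.
move=> t_ge0; rewrite /kuramoto_rhs -mulrA; apply: le_trans (ler_normD _ _) _.
apply: lerD; last rewrite normrM gtr0_norm // ler_pM2l //.
all: apply: (@norm_mean_le _ N _ _ N_gt0) => j; rewrite normrM.
- apply: ler_pM => //.
    apply: le_trans (ler_normD _ _) _.
    rewrite normrM (ger0_norm k0_ge0) (ger0_norm k1_ge0) lerD2r.
    by rewrite ler_piMr ?cos_max.
  apply: le_trans (ler_normB _ _) _.
  by have := omega_bound j t_ge0; have := omega_bound i t_ge0; lra.
- case: (eqVneq i j) => [->|ij]; first by rewrite subrr sgr0 normr0 mulr0 sqrtr_ge0.
  rewrite -[r]mulr1 ler_pM ?normr_sg ?lern1 ?leq_b1 //.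
  exact: deviation_le ij (energy_le_initial t_ge0).
Qed.

Lemma omega_diff_lipschitz i j x y : 0 <= x -> x <= y ->
  `|(omega j y - omega i y) - (omega j x - omega i x)| <= (B + B) * (y - x).
Proof.
move=> x_ge0; rewrite le_eqVlt => /predU1P[<-|xy]; first by rewrite !subrr normr0 mulr0.
have s_gt0 s : s \in `]x, y[%R -> 0 < s.
  by rewrite in_itv /= => /andP[xs _]; exact: le_lt_trans xs.
apply: (is_derive_lipschitz (df := fun s => rhs j s - rhs i s)) xy _ _
  (observable_within (@observable_omega_diff i j) x_ge0 xy).
- by move=> s /s_gt0 s_gt0'; apply: is_deriveB; exact: omega_deriv.
- move=> s /s_gt0/ltW s_ge0; apply: le_trans (ler_normB _ _) _.
  by apply: lerD; exact: rhs_bound.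
Qed.

Lemma omega_diff_cvg0 i j : omega j t - omega i t @[t --> +oo] --> 0.
Proof.
case: (eqVneq i j) => [->|ij].
  by under eq_fun do rewrite subrr; exact: cvg_cst.
apply: (dissipation_cvg0 (V := E) (L := B + B) (c := (k0 * cos U + k1) / (2 * N%:R))).
- by rewrite divr_gt0 ?mulr_gt0 ?Nr_gt0.
- by move=> t _; exact: energy_ge0.
- exact: omega_diff_lipschitz.
move=> x y e x_ge0 xy e_ge0 far; apply: energy_decay => // s sxy.
have s_ge0 : 0 <= s by case/andP: sxy => xs _; exact: le_trans (ltW xs).
split; first exact: admissible_all.
apply: le_trans (dissipation_ge_pair i j (admissible_all s_ge0)).
rewrite mulrAC mulrC ler_pM2l ?invr_gt0 ?mulr_gt0 ?Nr_gt0 //.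
apply: ler_pM; rewrite ?sqr_ge0 ?(ltW coupling_U_gt0) //.
  by apply: coupling_ge; case/andP: (gap_bounds ij (energy_le_initial s_ge0)).
have := far s sxy; have := real_normK (num_real (omega j s - omega i s)); nra.
Qed.

Lemma rhs_sum0 t : \sum_i rhs i t = 0.
Proof.
rewrite (eq_bigr _ (fun i _ => rhs_expand i t)).
by apply: sumr_skew0 => i j; rewrite coupling_sym spring_skew; ring.
Qed.

Lemma omega_sum_const t : 0 <= t -> \sum_i omega i t = \sum_i omega i 0.
Proof.
rewrite le_eqVlt => /predU1P[<- //|t_gt0].
apply/eqP; rewrite -subr_eq0 -normr_le0.
have := is_derive_lipschitz (df := fun s => \sum_i rhs i s) (L := 0) t_gt0 _ _
  (observable_within observable_omega_sum (lexx 0) t_gt0).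
rewrite mul0r; apply.
- move=> s; rewrite in_itv /= => /andP[s_gt0 _].
  by have := is_derive_sum (fun i => omega_deriv i s_gt0); rewrite fct_sumE.
- by move=> s _; rewrite rhs_sum0 normr0.
Qed.

Lemma omega_cvg0 : \sum_i omega i 0 = 0 -> forall i, omega i t @[t --> +oo] --> 0.
Proof.
move=> sum0 i.
have mean : \forall t \near +oo, N%:R^-1 * \sum_j (omega i t - omega j t) = omega i t.
  exists 0; split; first exact: num_real.
  move=> t /ltW t_ge0; rewrite sumrB omega_sum_const // sum0 subr0 sumr_const card_ord.
  by rewrite -[omega i t *+ N]mulr_natr mulrCA mulVf ?mulr1 // pnatr_eq0 -lt0n N_gt0.
apply: cvg_trans (near_eq_cvg mean) _.
have : N%:R^-1 * \sum_j (omega i t - omega j t) @[t --> +oo]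
    --> N%:R^-1 * \sum_(j < N) (0 : R).
  by apply: cvgM; [exact: cvg_cst | apply: cvg_sumr => j; exact: omega_diff_cvg0].
by rewrite big1 // mulr0.
Qed.
End SecondOrderKuramoto.

Theorem theorem3p2 (R : realType) (N : nat) (k0 k1 k2 : R)
  (thinf : 'I_N -> 'I_N -> R) (theta omega : 'I_N -> R -> R) :
  (2 <= N)%N ->
  0 <= k0 -> 0 <= k1 ->
  (forall i j, thinf i j = thinf j i) ->
  (forall i, thinf i i = 0) ->
  (* global solution on [0, +oo) *)
  (forall i, theta i x @[x --> 0^'+] --> theta i 0) ->
  (forall i, omega i x @[x --> 0^'+] --> omega i 0) ->
  (forall (i : 'I_N) (t : R), 0 < t -> is_derive t 1 (theta i) (omega i t)) ->
  (forall (i : 'I_N) (t : R), 0 < t ->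
     is_derive t 1 (omega i) (kuramoto_rhs k0 k1 k2 thinf theta omega i t)) ->
  (* (Theta^0, W^0) \in S *)
  (forall i j, `|theta i 0 - theta j 0| < Ubound k2 thinf theta omega) ->
  Ubound k2 thinf theta omega < pi ->
  energy k2 thinf theta omega 0 < k2 * (min_offdiag thinf) ^+ 2 / (2 * N%:R) ->
  0 < k0 * cos (Ubound k2 thinf theta omega) + k1 ->
  0 < k2 ->
  (max_diff (fun i => omega i t) @[t --> +oo] --> 0) /\
  ((\sum_(i < N) omega i 0 = 0) ->
     max_abs (fun i => omega i t) @[t --> +oo] --> 0).
Proof.
move=> N_ge2 k0_ge0 k1_ge0 thinf_sym _ theta0 omega0 theta' omega' _ U_lt_pi E0_lt
  coupling_U_gt0 k2_gt0.
have := omega_diff_cvg0 N_ge2 k0_ge0 k1_ge0 k2_gt0 thinf_sym U_lt_pi coupling_U_gt0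
  E0_lt theta0 omega0 theta' omega'.
have := omega_cvg0 N_ge2 k0_ge0 k1_ge0 k2_gt0 thinf_sym U_lt_pi coupling_U_gt0
  E0_lt theta0 omega0 theta' omega'.
move=> omega_cvg0' omega_diff_cvg0'.
by split=> [|sum0]; [exact: max_diff_cvg0 | apply: max_abs_cvg0; exact: omega_cvg0'].
Qed.
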